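(* Let $R$ be a commutative ring with identity, $M$ an $R$-module and $a\in R$. Then $$\bigcap_{b\in R} b\Gamma_b(M)\subseteq a\Gamma_a(M)\subseteq S_a(M)\subseteq S(M)\subseteq \beta(M)\subseteq \operatorname{Rad}(M).$$
   Context: For $b\in R$, $b\Gamma_{b}(M)=\{bm \mid m\in M,\ b^{k}m=0 \text{ for some } k\in\mathbb{Z}^{+}\}$. An $R$-module $N$ is $b$-reduced if $b^2n=0$ implies $bn=0$ for $n\in N$, and reduced if it is $b$-reduced for all $b\in R$. A proper submodule $N$ of $M$ is $a$-semiprime (resp. semiprime) if $M/N$ is $a$-reduced (resp. reduced). A proper submodule $N$ of $M$ is prime if for all $r\in R$, $m\in M$, $rm\in N$ implies $m\in N$ or $rM\subseteq N$. $S_a(M)$, $S(M)$, $\beta(M)$, $\operatorname{Rad}(M)$ denote respectively the intersections of all $a$-semiprime, all semiprime, all prime, and all maximal submodules of $M$ (the empty intersection being $M$). *)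

From HB Require Import structures.
From mathcomp Require Import all_boot all_order all_algebra.
Set Implicit Arguments. Unset Strict Implicit. Unset Printing Implicit Defensive.
Import GRing.Theory.
Local Open Scope ring_scope.

Section Modules.
Variables (R : comPzRingType) (M : lmodType R).

Definition is_submodule (N : M -> Prop) : Prop :=
  N 0 /\ (forall x y, N x -> N y -> N (x + y)) /\ (forall (r : R) x, N x -> N (r *: x)).

Definition proper_submodule (N : M -> Prop) : Prop :=
  is_submodule N /\ exists m, ~ N m.

Definition bGamma (b : R) (x : M) : Prop :=
  exists m : M, x = b *: m /\ exists k : nat, (0 < k)%N /\ (b ^+ k) *: m = 0.

(* M/N is b-reduced: b^2 (m + N) = 0 implies b (m + N) = 0, i.e. written on
   representatives: b^2 m \in N -> b m \in N. *)
Definition quot_reduced_by (N : M -> Prop) (b : R) : Prop :=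
  forall m : M, N ((b ^+ 2) *: m) -> N (b *: m).

Definition a_semiprime (a : R) (N : M -> Prop) : Prop :=
  proper_submodule N /\ quot_reduced_by N a.

Definition semiprime (N : M -> Prop) : Prop :=
  proper_submodule N /\ forall b : R, quot_reduced_by N b.

Definition prime_submodule (N : M -> Prop) : Prop :=
  proper_submodule N /\
  forall (r : R) (m : M), N (r *: m) -> N m \/ (forall x : M, N (r *: x)).

Definition maximal_submodule (N : M -> Prop) : Prop :=
  proper_submodule N /\
  forall K : M -> Prop, is_submodule K -> (forall x, N x -> K x) ->
    (forall x, K x <-> N x) \/ (forall x, K x).

(* Intersections of families of submodules (empty intersection = M). *)
Definition S_a (a : R) (x : M) : Prop := forall N, a_semiprime a N -> N x.
Definition S_all (x : M) : Prop := forall N, semiprime N -> N x.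
Definition beta (x : M) : Prop := forall N, prime_submodule N -> N x.
Definition Rad (x : M) : Prop := forall N, maximal_submodule N -> N x.

End Modules.

(** Each family of submodules in the chain is contained in the next one, so the
intersections decrease: a maximal submodule [N] is prime because
[{y | r y \in N}] is a submodule containing [N], hence equal to [N] or to [M];
a prime submodule is [b]-semiprime for every [b] by applying primality to
[b *: (b *: m)]; and an [a]-semiprime submodule contains every [a m] with
[a^k m = 0], since [a^(j+1) m \in N] can be lowered to [a m \in N]. *)

From mathcomp Require Import all_boot all_order all_algebra.
From Stdlib Require Import Classical.
Local Open Scope ring_scope.
Import GRing.Theory.

Section Chain.
Variables (R : comPzRingType) (M : lmodType R).
Implicit Types (N : M -> Prop) (a b r : R) (x m : M).

Lemma quot_reduced_by_expS N a m j :
  quot_reduced_by N a -> N ((a ^+ j.+1) *: m) -> N (a *: m).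
Proof.
move=> red_a; elim: j => [|j IHj]; first by rewrite expr1.
move=> Nm; apply: IHj; rewrite exprS -scalerA; apply: red_a.
by rewrite scalerA -exprD.
Qed.

Lemma bGamma_sub_reduced N a x :
  N 0 -> quot_reduced_by N a -> bGamma a x -> N x.
Proof.
move=> N0 red_a [m [-> [[|j] [//= _ nil_m]]]].
by apply: (quot_reduced_by_expS _ _ _ j red_a); rewrite nil_m.
Qed.

Lemma semiprime_a_semiprime N a : semiprime N -> a_semiprime a N.
Proof. by case=> properN red; split. Qed.

Lemma prime_semiprime N : prime_submodule N -> semiprime N.
Proof.
case=> properN primeN; split=> // b m; rewrite expr2 -scalerA.
by case/primeN.
Qed.

Lemma is_submodule_scale_preim N r :
  is_submodule N -> is_submodule (fun y => N (r *: y)).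
Proof.
case=> N0 [ND NZ]; split; first by rewrite scaler0.
split=> [y z Ny Nz | s y Ny]; first by rewrite scalerDr; apply: ND.
by rewrite scalerA mulrC -scalerA; apply: NZ.
Qed.

Lemma maximal_prime N : maximal_submodule N -> prime_submodule N.
Proof.
case=> properN maxN; split=> // r m Nrm.
have [Nm | notNm] := classic (N m); [by left | right].
have [subN _] := properN; have [_ [_ NZ]] := subN.
have subK : forall x, N x -> N (r *: x) by move=> x; apply: NZ.
case: (maxN _ (is_submodule_scale_preim N r subN) subK) => // eqKN.
by case: notNm; apply/eqKN.
Qed.

End Chain.

Theorem mainTheorem12 (R : comPzRingType) (M : lmodType R) (a : R) :
  (forall x : M, (forall b : R, bGamma b x) -> bGamma a x) /\
  (forall x : M, bGamma a x -> S_a a x) /\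
  (forall x : M, S_a a x -> S_all x) /\
  (forall x : M, S_all x -> beta x) /\
  (forall x : M, beta x -> Rad x).
Proof.
split; first by move=> x; apply.
split.
  move=> x ax N [[[N0 _] _] red_a].
  exact: bGamma_sub_reduced red_a ax.
split; first by move=> x Sx N semiN; apply: Sx; apply: semiprime_a_semiprime.
split; first by move=> x Sx N /prime_semiprime; apply: Sx.
by move=> x betax N /maximal_prime; apply: betax.
Qed.
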